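(* Fix a device $n$, a control parameter $V\ge0$ and a frame $k$. For any feasible decisions $0\le\gamma_n^k\le1$ and $0\le p_n^t\le\overline{P}_n$ for all $t\in\mathcal{T}_k=\{kT,\dots,(k+1)T-1\}$, $$\mathcal{D}_n(Q_n^{kT})\le\beta_2T+\mathbb{E}\Big\{\sum_{t\in\mathcal{T}_k}VX_n^t+Q_n^{kT}(E_n^t-\overline{E}_n)\,\Big|\,Q_n^{kT}\Big\},$$ where $\beta_2=\beta_1+\frac{(T-1)[(E_{n,\max}-\overline{E}_n)E_{n,\max}+\overline{E}_n^2]}{2}$ and $\beta_1=\frac12(E_{n,\max}^2+\overline{E}_n^2)$.
   Context: Device $n$ in a federated learning system consumes energy $E_n^t\ge0$ in slot $t$ (computation plus communication energy, determined by the freezing percentage $\gamma_n^k$ of the current frame and the transmit power $p_n^t$), and $E_{n,\max}$ is an upper bound with $E_n^t\le E_{n,\max}$ for all $t$. $\overline{E}_n>0$ is its average energy budget and $\overline{P}_n$ its peak power. $X_n^t=\lambda\mathbb{1}_n^tB_n(\gamma_n^k-1)$ is the per-slot convergence-error term, with constant $\lambda>0$, data size $B_n$, and success indicator $\mathbb{1}_n^t\in\{0,1\}$. The virtual energy-deficit queue evolves as $Q_n^{t+1}=\max\{Q_n^t+E_n^t-\overline{E}_n,0\}$ with $Q_n^0=0$. Slots are grouped into frames of $T$ slots. The $T$-slot conditional Lyapunov drift is $\Delta_{n,T}(Q_n^t)=\mathbb{E}\{\frac12(Q_n^{t+T})^2-\frac12(Q_n^t)^2\mid Q_n^t\}$,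 and the drift-plus-penalty of frame $k$ is $\mathcal{D}_n(Q_n^{kT})=\Delta_{n,T}(Q_n^{kT})+V\mathbb{E}\{\sum_{t\in\mathcal{T}_k}X_n^t\mid Q_n^{kT}\}$. Expectations are over channel randomness. *)

From HB Require Import structures.
From mathcomp Require Import all_boot all_order all_algebra.
From mathcomp Require Import all_classical all_reals all_analysis.
Set Implicit Arguments. Unset Strict Implicit. Unset Printing Implicit Defensive.
Import Order.TTheory GRing.Theory Num.Theory.
Local Open Scope classical_set_scope.
Local Open Scope ring_scope.

Section FLDefs.
Context {d : measure_display} {Omega : measurableType d} {R : realType}.

Fixpoint Qq (Ebar : R) (En : nat -> Omega -> R) (t : nat) (w : Omega) : R :=
  match t with
  | 0%N => 0
  | t'.+1 => Num.max (Qq Ebar En t' w + En t' w - Ebar) 0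
  end.

(* Per-slot convergence-error term X_n^t = lambda * 1_n^t * B_n * (gamma_n^k - 1),
   gamma = the (random) freezing percentage of the current frame k. *)
Definition Xterm (lam B : R) (ind : nat -> Omega -> R) (gamma : Omega -> R)
  (t : nat) (w : Omega) : R :=
  lam * ind t w * B * (gamma w - 1).

Definition beta1 (Emax Ebar : R) : R := 2^-1 * (Emax ^+ 2 + Ebar ^+ 2).

Definition beta2 (T : nat) (Emax Ebar : R) : R :=
  beta1 Emax Ebar +
  ((T%:R - 1) * ((Emax - Ebar) * Emax + Ebar ^+ 2)) / 2.

(* "E{ f | Y } <= E{ g | Y }" (a.s.), written through the defining property
   of conditional expectation given sigma(Y): for every Borel set Bs,
   E[f 1_{Y in Bs}] <= E[g 1_{Y in Bs}]. *)
Definition cond_exp_le (mu : {measure set Omega -> \bar R})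
  (Y f g : Omega -> R) : Prop :=
  forall Bs : set R, measurable Bs ->
    (\int[mu]_(w in Y @^-1` Bs) (f w)%:E <= \int[mu]_(w in Y @^-1` Bs) (g w)%:E)%E.

End FLDefs.

From HB Require Import structures.
From mathcomp Require Import all_boot all_order all_algebra.
From mathcomp Require Import all_classical all_reals all_analysis.
From mathcomp Require Import lra.
Import Order.TTheory GRing.Theory Num.Theory.
Local Open Scope classical_set_scope.
Local Open Scope ring_scope.

(* The bound holds pathwise, so it survives integration over any event
   {Q^{kT} in Bs}.  Along a path, max{x, 0}^2 <= x^2 gives
   Q_{t+1}^2 - Q_t^2 <= (E_t - Ebar)^2 + 2 Q_t (E_t - Ebar).  Replacing Q_t by
   Q_{kT} costs (Q_t - Q_{kT}) (E_t - Ebar); the queue moves by at least -Ebar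
   and at most Emax per slot, so this error is at most
   (t - kT) ((Emax - Ebar) Emax + Ebar^2), and summing this arithmetic
   progression over the frame yields the (T - 1) part of beta2.  The penalty
   terms V X_n^t occur on both sides. *)

Lemma mul_drift_le (R : realFieldType) (J c emax D x : R) :
  0 <= J -> 0 <= c -> c <= emax -> - (J * c) <= D <= J * emax -> 0 <= x <= emax ->
  D * (x - c) <= J * ((emax - c) * emax + c ^+ 2).
Proof.
move=> J_ge0 c_ge0 c_le /andP[D_ge D_le] /andP[x_ge0 x_le].
have [c_le_x|x_lt_c] := leP c x.
- have : D * (x - c) <= J * emax * (x - c) by apply: ler_wpM2r; lra.
  have : J * emax * (x - c) <= J * emax * (emax - c).
    by apply: ler_wpM2l; [apply: mulr_ge0 | ]; lra.
  have : 0 <= J * c ^+ 2 by apply: mulr_ge0; [| exact: sqr_ge0].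
  lra.
- have : D * (x - c) <= - (J * c) * (x - c) by apply: ler_wnM2r; lra.
  have : 0 <= J * c * x by rewrite !mulr_ge0.
  have : 0 <= J * ((emax - c) * emax) by apply: mulr_ge0 => //; apply: mulr_ge0; lra.
  lra.
Qed.

Section Lindley.
Variable R : realFieldType.
Variables (c emax : R) (e q : nat -> R).
Hypothesis c_ge0 : 0 <= c.
Hypothesis e_ge0 : forall t, 0 <= e t.
Hypothesis e_le : forall t, e t <= emax.
Hypothesis q0 : q 0 = 0.
Hypothesis qS : forall t, q t.+1 = Num.max (q t + e t - c) 0.

(* lra and nra ignore section hypotheses, hence the [have := c_ge0] below. *)

Let emax_ge0 : 0 <= emax. Proof. exact: le_trans (e_ge0 0) (e_le 0). Qed.

Lemma lindley_ge0 t : 0 <= q t.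
Proof. by case: t => [|t]; rewrite ?q0 // qS le_max lexx orbT. Qed.

Lemma lindley_sqrS t : q t.+1 ^+ 2 <= (q t + (e t - c)) ^+ 2.
Proof.
by rewrite qS addrA; case: (leP 0 (q t + e t - c)) => // _; rewrite expr0n sqr_ge0.
Qed.

Lemma lindley_incr t : - c <= q t.+1 - q t <= emax.
Proof.
have := lindley_ge0 t; have := e_ge0 t; have := e_le t; have := c_ge0; have := emax_ge0.
by rewrite qS; case: (leP 0 (q t + e t - c)) => *; apply/andP; split; lra.
Qed.

Lemma lindley_drift m j : - (j%:R * c) <= q (m + j) - q m <= j%:R * emax.
Proof.
rewrite -(telescope_sumr _ (leq_addr j m)).
have sum_const x : \sum_(m <= i < m + j) x = j%:R * x.
  by rewrite sumr_const_nat addKn mulr_natl.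
rewrite -mulrN -!sum_const; apply/andP; split; apply: ler_sum => i _;
  by case/andP: (lindley_incr i).
Qed.

Lemma lindley_null t : emax <= c -> q t = 0.
Proof.
move=> emax_le; elim: t => [//|t IH]; rewrite qS IH add0r max_r //.
by have := e_le t; lra.
Qed.

Lemma lindley_cross m i :
  (q (m + i) - q m) * (e (m + i) - c) <= i%:R * ((emax - c) * emax + c ^+ 2).
Proof.
have [emax_le|c_lt] := leP emax c.
  by rewrite !lindley_null // subrr mul0r mulr_ge0 //; nra.
apply: mul_drift_le; [exact: ler0n | exact: c_ge0 | exact: ltW | exact: lindley_drift |].
by rewrite e_ge0 e_le.
Qed.

Lemma lindley_sqr_drift m j :
  q (m + j) ^+ 2 - q m ^+ 2
  <= j%:R * (emax ^+ 2 + c ^+ 2) + j%:R * (j%:R - 1) * ((emax - c) * emax + c ^+ 2)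
     + 2 * \sum_(m <= t < m + j) q m * (e t - c).
Proof.
elim: j => [|j IH]; first by rewrite addn0 big_geq // subrr mulr0 !mul0r !addr0.
rewrite addnS big_nat_recr ?leq_addr //= -natr1.
have sq := lindley_sqrS (m + j); have cross := lindley_cross m j.
have step_sq : (e (m + j) - c) ^+ 2 <= emax ^+ 2 + c ^+ 2.
  by have := e_ge0 (m + j); have := e_le (m + j); have := c_ge0; nra.
lra.
Qed.

End Lindley.

(* Unlike [le_integral], no measurability or integrability is required: both
   parts of the integral are suprema over simple functions below the integrand. *)
Lemma le_integral_pointwise d (T : measurableType d) (R : realType)
  (mu : {measure set T -> \bar R}) (D : set T) (f g : T -> \bar R) :
  (forall x, (f x <= g x)%E) -> (\int[mu]_(x in D) f x <= \int[mu]_(x in D) g x)%E.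
Proof.
move=> fg; rewrite /integral; apply: leeB.
- apply: ge_ereal_sup => _ [h /= hf <-]; apply: ereal_sup_ubound; exists h => //= x.
  apply: le_trans (hf x) _; apply: (@funepos_le _ _ setT) => //; last exact: in_setT.
  by move=> y _; apply: lee_restrict.
- apply: ge_ereal_sup => _ [h /= hf <-]; apply: ereal_sup_ubound; exists h => //= x.
  apply: le_trans (hf x) _; apply: (@funeneg_le _ _ setT) => //; last exact: in_setT.
  by move=> y _; apply: lee_restrict.
Qed.

Lemma cond_exp_le_pointwise d (Omega : measurableType d) (R : realType)
  (mu : {measure set Omega -> \bar R}) (Y f g : Omega -> R) :
  (forall w, f w <= g w) -> cond_exp_le mu Y f g.
Proof. by move=> fg Bs _; apply: le_integral_pointwise => w; rewrite lee_fin. Qed.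

Theorem lemma3 (d : measure_display) (Omega : measurableType d) (R : realType)
  (P : probability Omega R)
  (T : nat) (hT : (0 < T)%N)
  (lam B V Ebar Emax Pbar : R) (hlam : 0 < lam) (hEbar : 0 < Ebar) (hV : 0 <= V)
  (En : nat -> Omega -> R)
  (hEm : forall t, measurable_fun setT (En t))
  (hE0 : forall t w, 0 <= En t w) (hEmax : forall t w, En t w <= Emax)
  (ind : nat -> Omega -> R)
  (hind_m : forall t, measurable_fun setT (ind t))
  (hind : forall t w, ind t w = 0 \/ ind t w = 1)
  (k : nat) (gamma : Omega -> R) (p : nat -> Omega -> R)
  (hgam_m : measurable_fun setT gamma)
  (hgam : forall w, 0 <= gamma w <= 1)
  (hp : forall t w, (k * T <= t < k.+1 * T)%N -> 0 <= p t w <= Pbar) :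
  cond_exp_le P (Qq Ebar En (k * T))
    (fun w => 2^-1 * (Qq Ebar En (k * T + T) w) ^+ 2
              - 2^-1 * (Qq Ebar En (k * T) w) ^+ 2
              + V * \sum_(k * T <= t < k.+1 * T) Xterm lam B ind gamma t w)
    (fun w => beta2 T Emax Ebar * T%:R
              + \sum_(k * T <= t < k.+1 * T)
                  (V * Xterm lam B ind gamma t w
                   + Qq Ebar En (k * T) w * (En t w - Ebar))).
Proof.
apply: cond_exp_le_pointwise => w.
have drift := @lindley_sqr_drift _ Ebar Emax (En^~ w) (Qq Ebar En ^~ w) (ltW hEbar)
  (hE0^~ w) (hEmax^~ w) erefl (fun _ => erefl) (k * T) T.
have -> : (k.+1 * T = k * T + T)%N by rewrite mulSn addnC.
rewrite big_split /= -(mulr_sumr _ _ _ V) /beta2 /beta1.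
lra.
Qed.
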